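(* Let $u^2:S\times B\to\mathbb{R}$ and let $y:S\to\Delta(B)$ be a non-constant map such that $U^2(\mu_0,y)\ge v^2$. Then every neighborhood of $u^2$ in $\mathbb{R}^{S\times B}$ contains a function $\tilde u^2:S\times B\to\mathbb{R}$ such that $\tilde U^2(\mu_0,y)>\tilde v^2$, where $\tilde U^2,\tilde v^2$ are computed with $\tilde u^2$ in place of $u^2$.
   Context: $S$ and $B$ are finite sets, $m\in\Delta(S)$ has full support (the invariant measure of an irreducible aperiodic Markov chain on $S$). $\mu_0$ is the distribution on $S\times S$ with $\mu_0(s,s)=m(s)$ and $\mu_0(s,t)=0$ for $s\ne t$. For a receiver payoff $u^2:S\times B\to\mathbb{R}$ (extended linearly to mixed actions) and $y:S\to\Delta(B)$, $U^2(\mu_0,y)=\sum_{s\in S}m(s)u^2(s,y(\cdot\mid s))$ and $v^2=\max_{b\in B}\sum_{s\in S}m(s)u^2(s,b)$. A map $y$ is constant if $y(\cdot\mid s)$ does not depend on $s$. *)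

From mathcomp Require Import all_boot all_order all_algebra.
From mathcomp Require Import reals.
Set Implicit Arguments. Unset Strict Implicit. Unset Printing Implicit Defensive.
Import Order.TTheory GRing.Theory Num.Theory.
Local Open Scope ring_scope.

Definition is_distr {R : realType} {X : finType} (p : X -> R) : Prop :=
  (forall x, 0 <= p x) /\ \sum_(x : X) p x = 1.

Definition u_mixed {R : realType} {S B : finType}
  (u : S -> B -> R) (s : S) (q : B -> R) : R :=
  \sum_(b : B) q b * u s b.

Definition U2 {R : realType} {S B : finType}
  (m : S -> R) (u : S -> B -> R) (y : S -> B -> R) : R :=
  \sum_(s : S) m s * u_mixed u s (y s).

(* v^2 = max_b sum_s m(s) u^2(s,b); B is assumed nonempty (b0 witness) *)
Definition v2 {R : realType} {S B : finType}
  (m : S -> R) (u : S -> B -> R) (b0 : B) : R :=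
  \big[Num.max/(\sum_(s : S) m s * u s b0)]_(b : B) \sum_(s : S) m s * u s b.

Definition constant_map {R : realType} {S B : finType} (y : S -> B -> R) : Prop :=
  forall s t : S, forall b : B, y s b = y t b.

From mathcomp Require Import all_boot all_order all_algebra.
From mathcomp Require Import reals.
From mathcomp Require Import ring lra.
Set Implicit Arguments. Unset Strict Implicit. Unset Printing Implicit Defensive.
Import Order.TTheory GRing.Theory Num.Theory.
Local Open Scope ring_scope.

(* Perturb [u] in the direction [y s b - ybar b], where [ybar] is the
   [m]-average of the rows of [y].  Every column average [\sum_s m s * u s b]
   is unchanged, so the receiver's best constant reply keeps the value [v2];
   but [U2] increases by [delta] times the [m]-weighted dispersion of the rows
   of [y], which is positive exactly when [y] is not constant. *)

Section Perturbation.

Variables (R : realType) (S B : finType) (m : S -> R).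

Definition row_mean (y : S -> B -> R) (b : B) : R := \sum_(s : S) m s * y s b.

Definition row_dev (y : S -> B -> R) (s : S) (b : B) : R := y s b - row_mean y b.

Definition perturb (u y : S -> B -> R) (delta : R) (s : S) (b : B) : R :=
  u s b + delta * row_dev y s b.

Definition dispersion (y : S -> B -> R) : R :=
  \sum_(s : S) \sum_(b : B) m s * row_dev y s b ^+ 2.

Lemma v2_eq_col (u u' : S -> B -> R) (b0 : B) :
  (forall b, \sum_(s : S) m s * u' s b = \sum_(s : S) m s * u s b) ->
  v2 m u' b0 = v2 m u b0.
Proof. by move=> eq_col; rewrite /v2 eq_col; apply: eq_bigr => b _. Qed.

Lemma U2_perturb (u y : S -> B -> R) (delta : R) :
  U2 m (perturb u y delta) y =
  U2 m u y + delta * \sum_(s : S) m s * \sum_(b : B) y s b * row_dev y s b.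
Proof.
rewrite /U2 /u_mixed mulr_sumr -big_split /=; apply: eq_bigr => s _.
rewrite !mulr_sumr -big_split /=; apply: eq_bigr => b _.
by rewrite /perturb; ring.
Qed.

Hypothesis m_sum1 : \sum_(s : S) m s = 1.

Lemma sum_row_dev (y : S -> B -> R) (b : B) :
  \sum_(s : S) m s * row_dev y s b = 0.
Proof.
under eq_bigr => s _ do rewrite /row_dev mulrBr.
by rewrite sumrB -big_distrl /= m_sum1 mul1r subrr.
Qed.

Lemma col_sum_perturb (u y : S -> B -> R) (delta : R) (b : B) :
  \sum_(s : S) m s * perturb u y delta s b = \sum_(s : S) m s * u s b.
Proof.
rewrite /perturb; under eq_bigr => s _ do rewrite mulrDr mulrCA.
by rewrite big_split /= -mulr_sumr sum_row_dev mulr0 addr0.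
Qed.

(* The covariance of [y] with its own deviation is its variance, since the
   deviations have [m]-mean zero. *)
Lemma covariance_row_dev (y : S -> B -> R) :
  \sum_(s : S) m s * \sum_(b : B) y s b * row_dev y s b = dispersion y.
Proof.
have mean_term : \sum_(s : S) \sum_(b : B) m s * row_mean y b * row_dev y s b = 0.
  rewrite exchange_big /=; apply: big1 => b _.
  under eq_bigr => s _ do rewrite mulrAC.
  by rewrite -big_distrl /= sum_row_dev mul0r.
rewrite /dispersion -[RHS]addr0 -[X in _ + X]mean_term -big_split /=.
apply: eq_bigr => s _; rewrite mulr_sumr -big_split /=.
by apply: eq_bigr => b _; rewrite /row_dev; ring.
Qed.

Hypothesis m_gt0 : forall s, 0 < m s.

Lemma dispersion_gt0 (y : S -> B -> R) : ~ constant_map y -> 0 < dispersion y.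
Proof.
move=> y_nconst.
have term_ge0 s b : 0 <= m s * row_dev y s b ^+ 2.
  by rewrite mulr_ge0 ?sqr_ge0 ?ltW.
have row_ge0 s : 0 <= \sum_(b : B) m s * row_dev y s b ^+ 2.
  by apply: sumr_ge0 => b _.
rewrite lt_def sumr_ge0 // andbT; apply/negP => /eqP /(psumr_eq0P (fun s _ => row_ge0 s)) rows0.
apply: y_nconst => s t b.
have dev0 s' : row_dev y s' b = 0.
  have /eqP := psumr_eq0P (fun b' _ => term_ge0 s' b') (rows0 s' isT) (i := b) isT.
  by rewrite mulf_eq0 (gt_eqF (m_gt0 s')) sqrf_eq0 => /eqP.
by rewrite (subr0_eq (dev0 s)) (subr0_eq (dev0 t)).
Qed.

End Perturbation.

Lemma distr_entry_le1 (R : realType) (X : finType) (p : X -> R) (x : X) :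
  is_distr p -> 0 <= p x <= 1.
Proof.
case=> p_ge0 p_sum1; rewrite p_ge0 -p_sum1 (bigD1 x) //= lerDl.
by apply: sumr_ge0 => i _.
Qed.

Lemma norm_row_dev_le1 (R : realType) (S B : finType) (m : S -> R)
    (y : S -> B -> R) (s : S) (b : B) :
  is_distr m -> (forall s, is_distr (y s)) -> `|row_dev m y s b| <= 1.
Proof.
case=> m_ge0 m_sum1 y_distr.
have y01 s' : 0 <= y s' b <= 1 by exact: distr_entry_le1 (y_distr s').
have mean_ge0 : 0 <= row_mean m y b.
  by apply: sumr_ge0 => s' _; rewrite mulr_ge0 //; case/andP: (y01 s').
have mean_le1 : row_mean m y b <= 1.
  rewrite -m_sum1; apply: ler_sum => s' _.
  by rewrite ler_piMr //; case/andP: (y01 s').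
rewrite ler_norml /row_dev; case/andP: (y01 s) => ? ?; apply/andP; split; lra.
Qed.

Theorem lemma11 (R : realType) (S B : finType) (b0 : B)
  (m : S -> R) (hm : is_distr m) (hmpos : forall s, 0 < m s)
  (u : S -> B -> R) (y : S -> B -> R)
  (hy : forall s, is_distr (y s))
  (hnc : ~ constant_map y)
  (hU : v2 m u b0 <= U2 m u y) :
  forall eps : R, 0 < eps ->
    exists ut : S -> B -> R,
      (forall s b, `|ut s b - u s b| < eps) /\
      v2 m ut b0 < U2 m ut y.
Proof.
move=> eps eps_gt0; have m_sum1 := hm.2.
exists (perturb m u y (eps / 2)); split.
  move=> s b; rewrite /perturb addrC addKr normrM gtr0_norm ?divr_gt0 //.
  have := norm_row_dev_le1 s b hm hy; have := normr_ge0 (row_dev m y s b); nra.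
rewrite (v2_eq_col _ (col_sum_perturb m_sum1 u y _)) U2_perturb.
rewrite covariance_row_dev //; apply: (le_lt_trans hU); rewrite ltrDl.
by rewrite mulr_gt0 ?divr_gt0 ?dispersion_gt0.
Qed.
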